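(* Let $(\mathcal{G},c)$ be a colored directed acyclic graph with compatible coloring, and assume that $c(i)=c(j)$ implies $(\mathcal{G}_i,c)\cong(\mathcal{G}_j,c)$ for all vertices $i,j$. Then there exists an inverse topological order $\succ$ of $V$ in which each vertex color class forms a consecutive block, i.e. $i\succ j\succ k$ and $c(i)=c(k)$ imply $c(j)=c(i)$.
   Context: $\mathcal{G}=(V,\vec E)$ is a finite DAG; $j\to i$ means $(j,i)\in\vec E$. A coloring is $c:V\cup\vec E\to[r+R]$; compatible means $c(V)\cap c(\vec E)=\emptyset$ and $c(j\to i)=c(l\to k)$ implies $c(i)=c(k)$. $\mathrm{ch}(i)=\{k:i\to k\}$; $(\mathcal{G}_i,c)$ is the colored graph on $\{i\}\cup\mathrm{ch}(i)$ with edges $i\to k$, $k\in\mathrm{ch}(i)$, and colors inherited from $c$; $\cong$ is isomorphism of colored graphs. An inverse topological order is a total order $\succ$ on $V$ such that $j\to i$ implies $j\succ i$. *)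

From mathcomp Require Import all_boot.
Set Implicit Arguments. Unset Strict Implicit. Unset Printing Implicit Defensive.

(* A finite directed graph on the finite vertex type V; E j i means j -> i. *)

Definition acyclic (V : finType) (E : rel V) : Prop :=
  forall x y : V, E x y -> ~~ connect E y x.

(* A coloring c : V u E -> [n] is given by vertex colors cv and edge colors
   ce (only the values ce j i on edges j -> i are relevant). *)
Definition compatible (V : finType) (E : rel V) (n : nat)
  (cv : V -> 'I_n) (ce : V -> V -> 'I_n) : Prop :=
  (forall (v j i : V), E j i -> cv v != ce j i) /\
  (forall (j i l k : V), E j i -> E l k -> ce j i = ce l k -> cv i = cv k).

Definition ch (V : finType) (E : rel V) (i : V) : {set V} := [set k | E i k].

Definition locV (V : finType) (E : rel V) (i : V) : {set V} := i |: ch E i.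

Definition locE (V : finType) (E : rel V) (i : V) : rel V :=
  fun x y => (x == i) && (y \in ch E i).

Definition loc_iso (V : finType) (E : rel V) (n : nat)
  (cv : V -> 'I_n) (ce : V -> V -> 'I_n) (i j : V) : Prop :=
  exists f : V -> V,
    [/\ {in locV E i &, injective f},
        f @: locV E i = locV E j,
        {in locV E i &, forall x y, locE E i x y = locE E j (f x) (f y)},
        {in locV E i, forall x, cv (f x) = cv x} &
        {in locV E i &, forall x y, locE E i x y -> ce (f x) (f y) = ce x y}].

Definition strict_total_order (V : finType) (succ : rel V) : Prop :=
  [/\ irreflexive succ, transitive succ &
      forall x y : V, x != y -> succ x y || succ y x].

Definition inv_topological (V : finType) (E : rel V) (succ : rel V) : Prop :=
  strict_total_order succ /\ forall j i : V, E j i -> succ j i.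

From mathcomp Require Import all_boot.

Set Implicit Arguments.
Unset Strict Implicit.
Unset Printing Implicit Defensive.

(* Say that colour a points to colour b when some a-vertex has a b-child.
   As vertices of one colour have isomorphic local graphs, then EVERY
   a-vertex has a b-child.  A cycle through a in this colour graph would
   therefore lead from any a-vertex, along a nonempty path of G, to another
   a-vertex, forever; this is impossible in a finite DAG.  So the colour
   graph is acyclic, and listing the vertices by decreasing number of colours
   reachable from their colour, then by colour, then arbitrarily, gives an
   inverse topological order in which each colour class is a block. *)

Definition descendants (T : finType) (e : rel T) (x : T) : {set T} :=
  [set z | connect e x z].

Lemma card_descendants_lt (T : finType) (e : rel T) (x y : T) :
  connect e x y -> ~~ connect e y x ->
  #|descendants e y| < #|descendants e x|.
Proof.
move=> exy nyx; apply: proper_card; apply/properP; split.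
  by apply/subsetP => z; rewrite !inE; apply: connect_trans.
by exists x; rewrite !inE ?connect0 // (negbTE nyx).
Qed.

Section Acyclic.
Variables (T : finType) (e : rel T).
Hypothesis acyclic_e : acyclic e.

Lemma acyclic_card_descendants_lt (x y z : T) :
  e x y -> connect e y z -> #|descendants e z| < #|descendants e x|.
Proof.
move=> exy cyz; have cxz := connect_trans (connect1 exy) cyz.
apply: card_descendants_lt cxz _; apply/negP => czx.
by move/negP: (acyclic_e exy); apply; apply: connect_trans cyz czx.
Qed.

Lemma acyclic_no_recurrent_pred (P : pred T) :
  (forall x, P x -> exists y z, [/\ e x y, connect e y z & P z]) ->
  forall x, ~~ P x.
Proof.
move=> recP x; have [m] := ubnP #|descendants e x|.
elim: m x => [|m IHm] x // lt_xm; apply/negP => Px.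
have [y [z [exy cyz Pz]]] := recP x Px.
have lt_zm := leq_trans (acyclic_card_descendants_lt exy cyz) (ltnSE lt_xm).
by move/negP: (IHm z lt_zm).
Qed.

End Acyclic.

Definition lex_rel (T : Type) (f : T -> nat) (s : rel T) : rel T :=
  fun x y => (f y < f x) || (f y == f x) && s x y.

Lemma inj_strict_total_order (T : finType) (f : T -> nat) :
  injective f -> strict_total_order (fun x y => f y < f x).
Proof.
move=> inj_f; split=> [x | y x z lt_yx lt_zy | x y neq_xy] /=.
- exact: ltnn.
- exact: ltn_trans lt_zy lt_yx.
- by rewrite -neq_ltn eq_sym (inj_eq inj_f).
Qed.

Lemma lex_rel_total (T : finType) (f : T -> nat) (s : rel T) :
  strict_total_order s -> strict_total_order (lex_rel f s).
Proof.
case=> irr_s tr_s tot_s; rewrite /lex_rel; split.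
- by move=> x; rewrite ltnn eqxx irr_s.
- move=> y x z /orP[lt_yx | /andP[/eqP eq_yx s_xy]]
               /orP[lt_zy | /andP[/eqP eq_zy s_yz]].
  + by rewrite (ltn_trans lt_zy lt_yx).
  + by rewrite eq_zy lt_yx.
  + by rewrite -eq_yx lt_zy.
  + by rewrite eq_zy eq_yx eqxx (tr_s _ _ _ s_xy s_yz) orbT.
- by move=> x y neq_xy; case: (ltngtP (f x) (f y)) => //= _; apply: tot_s.
Qed.

Lemma lex_rel_between (T : Type) (f : T -> nat) (s : rel T) (x y z : T) :
  lex_rel f s x y -> lex_rel f s y z -> f x = f z ->
  [/\ f y = f x, s x y & s y z].
Proof.
rewrite /lex_rel => /orP[lt_yx | /andP[/eqP eq_yx s_xy]]
                    /orP[lt_zy | /andP[/eqP eq_zy s_yz]] eq_xz.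
- by move: (ltn_trans lt_zy lt_yx); rewrite eq_xz ltnn.
- by move: lt_yx; rewrite eq_xz -eq_zy ltnn.
- by move: lt_zy; rewrite -eq_xz eq_yx ltnn.
- by [].
Qed.

Section ColourGraph.
Variables (V : finType) (E : rel V) (n : nat) (cv : V -> 'I_n).

Definition colour_rel : rel 'I_n :=
  fun a b => [exists j, exists i, [&& E j i, cv j == a & cv i == b]].

Lemma colour_rel_edge (j i : V) : E j i -> colour_rel (cv j) (cv i).
Proof.
by move=> Eji; apply/existsP; exists j; apply/existsP; exists i; rewrite Eji !eqxx.
Qed.

Lemma block_inv_topological_order :
  acyclic colour_rel ->
  exists succ : rel V,
    inv_topological E succ /\
    (forall i j k : V, succ i j -> succ j k -> cv i = cv k -> cv j = cv i).
Proof.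
move=> acyclic_colours.
pose height (x : V) := #|descendants colour_rel (cv x)|.
pose colour (x : V) := nat_of_ord (cv x).
pose index (x : V) := nat_of_ord (enum_rank x).
exists (lex_rel height (lex_rel colour (fun x y => index y < index x))).
split; first split.
- apply/lex_rel_total/lex_rel_total/inj_strict_total_order.
  by move=> x y /ord_inj/enum_rank_inj.
- move=> j i Eji; apply/orP; left.
  exact: (acyclic_card_descendants_lt acyclic_colours
            (colour_rel_edge Eji) (connect0 _ _)).
- move=> i j k s_ij s_jk eq_ik.
  have height_ik : height i = height k by rewrite /height eq_ik.
  have [_ s'_ij s'_jk] := lex_rel_between s_ij s_jk height_ik.
  have [eq_ji _ _] := lex_rel_between s'_ij s'_jk (congr1 val eq_ik).
  exact: ord_inj.
Qed.

Variable ce : V -> V -> 'I_n.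

Lemma loc_iso_child (j v i : V) :
  loc_iso E cv ce j v -> E j i -> exists2 w, E v w & cv w = cv i.
Proof.
case=> f [_ _ f_locE f_cv _] Eji.
have j_loc : j \in locV E j by rewrite setU11.
have i_loc : i \in locV E j by rewrite in_setU1 inE Eji orbT.
move: (f_locE j i j_loc i_loc); rewrite /locE eqxx inE Eji => /esym/andP[_].
by rewrite inE => Ev_fi; exists (f i); last exact: f_cv.
Qed.

Hypothesis loc_iso_of_colour : forall i j : V, cv i = cv j -> loc_iso E cv ce i j.

Lemma colour_rel_lift (a b : 'I_n) (v : V) :
  colour_rel a b -> cv v = a -> exists2 w, E v w & cv w = b.
Proof.
case/existsP=> j /existsP[i /and3P[Eji /eqP cj /eqP <-]] cv_v.
by apply: loc_iso_child Eji; apply: loc_iso_of_colour; rewrite cj.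
Qed.

Lemma connect_colour_rel_lift (a b : 'I_n) (v : V) :
  connect colour_rel a b -> cv v = a -> exists2 u, connect E v u & cv u = b.
Proof.
case/connectP=> p; elim: p a v => [|c p IHp] a v /= => [_ -> | /andP[ac pc] lab] cv_v.
  by exists v.
have [w Evw cw] := colour_rel_lift ac cv_v.
have [u cwu cu] := IHp c w pc lab cw.
by exists u; first exact: connect_trans (connect1 Evw) cwu.
Qed.

Lemma colour_rel_acyclic : acyclic E -> acyclic colour_rel.
Proof.
move=> acyclic_E a b ab; apply/negP => ba.
have [j ja] : exists j, cv j = a.
  by case/existsP: ab => j /existsP[i /and3P[_ /eqP cj _]]; exists j.
suff recurrent : forall v, cv v == a ->
    exists w u, [/\ E v w, connect E w u & cv u == a].
  by move: (acyclic_no_recurrent_pred acyclic_E recurrent j); rewrite ja eqxx.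
move=> v /eqP cv_v; have [w Evw cw] := colour_rel_lift ab cv_v.
have [u cwu cu] := connect_colour_rel_lift ba cw.
by exists w, u; rewrite cu eqxx.
Qed.

End ColourGraph.

Theorem lemma7p12 (V : finType) (E : rel V) (r R : nat)
  (cv : V -> 'I_(r + R)) (ce : V -> V -> 'I_(r + R)) :
  acyclic E ->
  compatible E cv ce ->
  (forall i j : V, cv i = cv j -> loc_iso E cv ce i j) ->
  exists succ : rel V,
    inv_topological E succ /\
    (forall i j k : V, succ i j -> succ j k -> cv i = cv k -> cv j = cv i).
Proof.
move=> acyclic_E _ loc_iso_of_colour.
apply: block_inv_topological_order.
exact: colour_rel_acyclic loc_iso_of_colour acyclic_E.
Qed.
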